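(* Let $\alpha\ge2$ be an even integer and $\beta\ge1$ an integer. Put $\theta=1$ if $\alpha\equiv0\pmod 4$ and $\theta=2$ if $\alpha\equiv2\pmod4$. Let $\Lambda\subseteq\mathbb Z^2$ be the lattice with generator matrix $$G=\begin{pmatrix}\beta & \tfrac{\alpha}{2}+\theta\\ 0 & \alpha\end{pmatrix}.$$ Let $\mathcal S=\{0,\dots,\beta-1\}\times\{0,\dots,\alpha-1\}$ and $\delta=(+1,0)$. Then $\Lambda$ induces a lattice tiling of $\mathcal S$, and $(\Lambda,\mathcal S,\delta)$ defines a folding.
   Context: A shape is a finite nonempty set $\mathcal S\subset\mathbb Z^2$ containing the origin; the origin is its distinguished center point. A lattice is a set $\Lambda=\{u_1v_1+u_2v_2 : u_1,u_2\in\mathbb Z\}$ for linearly independent $v_1,v_2\in\mathbb Z^2$. The matrix $G$ with rows $v_1,v_2$ is a generator matrix. $\Lambda$ induces a lattice tiling of $\mathcal S$ if the translates $\mathcal S+\lambda$, $\lambda\in\Lambda$, are pairwise disjoint and cover $\mathbb Z^2$. For $x\in\mathbb Z^2$, $c(x)$ denotes the unique $\lambda\in\Lambda$ with $x\in\mathcal S+\lambda$. For a nonzero $\delta\in\{-1,0,1\}^2$, the folded-row of $(\Lambda,\mathcal S,\delta)$ is the sequence $p_0=0$, $p_{k+1}=(p_k+\delta)-c(p_k+\delta)$. The triple $(\Lambda,\mathcal S,\delta)$ defines a folding if every element of $\mathcal S$ occurs in the folded-row. *)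

From Stdlib Require Import ZArith.
Open Scope Z_scope.

Definition pt := (Z * Z)%type.
Definition padd (x y : pt) : pt := (fst x + fst y, snd x + snd y).
Definition psub (x y : pt) : pt := (fst x - fst y, snd x - snd y).

(* Shapes as predicates on Z^2 (finiteness/nonemptiness/origin are
   properties of the concrete shape used). *)
Definition shape := pt -> Prop.

(* The lattice generated by the rows v1, v2 of a generator matrix. *)
Definition in_lattice (v1 v2 : pt) (l : pt) : Prop :=
  exists u1 u2 : Z, l = (u1 * fst v1 + u2 * fst v2, u1 * snd v1 + u2 * snd v2).

Definition lin_indep (v1 v2 : pt) : Prop := fst v1 * snd v2 - snd v1 * fst v2 <> 0.

Definition in_translate (S : shape) (l x : pt) : Prop := S (psub x l).

Definition lattice_tiling (v1 v2 : pt) (S : shape) : Prop :=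
  forall x : pt, exists l : pt,
    (in_lattice v1 v2 l /\ in_translate S l x) /\
    forall l', in_lattice v1 v2 l' -> in_translate S l' x -> l' = l.

(* c(x) = l  (well-defined as a function when the tiling property holds). *)
Definition is_c (v1 v2 : pt) (S : shape) (x l : pt) : Prop :=
  in_lattice v1 v2 l /\ in_translate S l x.

(* p is the folded-row: p_0 = 0, p_{k+1} = (p_k + δ) - c(p_k + δ). *)
Definition is_folded_row (v1 v2 : pt) (S : shape) (d : pt) (p : nat -> pt) : Prop :=
  p O = (0, 0) /\
  forall k : nat, is_c v1 v2 S (padd (p k) d) (psub (padd (p k) d) (p (Datatypes.S k))).

Definition defines_folding (v1 v2 : pt) (S : shape) (d : pt) : Prop :=
  lattice_tiling v1 v2 S /\
  exists p : nat -> pt, is_folded_row v1 v2 S d p /\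
    forall s : pt, S s -> exists k : nat, p k = s.

Definition rect_shape (b a : Z) : shape :=
  fun x => 0 <= fst x < b /\ 0 <= snd x < a.

Definition theta (a : Z) : Z := if Z.eqb (a mod 4) 0 then 1 else 2.

From Stdlib Require Import ZArith Lia.
Open Scope Z_scope.

(* Write b = beta, a = alpha and h = alpha/2 + theta alpha, so
   that Λ = { (u1 b, u1 h + u2 a) }.  Everything except coprimality works for
   arbitrary b, a > 0 and any h:
   - a point x lies in the translate of S = [0,b) x [0,a) by the lattice point
     with coordinates (u1, u2) iff u1 = x1 / b and u2 = (x2 - u1 h) / a
     (Euclidean division), which gives existence and uniqueness of c(x), i.e.
     the tiling;
   - the folded row is explicitly p_k = (k mod b, (-(k / b) h) mod a): moving
     one step right either stays in the same column block or wraps around by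
     subtracting the lattice vector (b, h), followed by a reduction mod a;
   - if u h + v a = 1, every (i, j) of S is reached at k = q b + i with
     q = (-j u) mod a, since -q h ≡ j u h ≡ j (mod a).
   Finally h is coprime to a: for a = 4n, h = 2n + 1, and for a = 4n + 2,
   h = 2n + 3; explicit Bezout coefficients are given in each case. *)

Definition lattice_point (b h a u1 u2 : Z) : pt := (u1 * b + u2 * 0, u1 * h + u2 * a).

Lemma in_lattice_rows (b h a : Z) (l : pt) :
  in_lattice (b, h) (0, a) l <-> exists u1 u2, l = lattice_point b h a u1 u2.
Proof. reflexivity. Qed.

Lemma rect_translate_iff (b h a u1 u2 : Z) (x : pt) : 0 < b -> 0 < a ->
  in_translate (rect_shape b a) (lattice_point b h a u1 u2) x <->
  u1 = fst x / b /\ u2 = (snd x - u1 * h) / a.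
Proof.
  intros Hb Ha; destruct x as [x1 x2].
  unfold in_translate, rect_shape, lattice_point, psub; simpl.
  split.
  - intros [H1 H2].
    assert (E1 : u1 = x1 / b) by (apply Z.div_unique_pos with (x1 - u1 * b); lia).
    split; [exact E1|].
    apply Z.div_unique_pos with (x2 - (u1 * h + u2 * a)); lia.
  - intros [-> ->].
    pose proof (Z.div_mod x1 b ltac:(lia)); pose proof (Z.mod_pos_bound x1 b Hb).
    pose proof (Z.div_mod (x2 - x1 / b * h) a ltac:(lia)).
    pose proof (Z.mod_pos_bound (x2 - x1 / b * h) a Ha).
    lia.
Qed.

Lemma rect_lattice_tiling (b a h : Z) : 0 < b -> 0 < a ->
  lattice_tiling (b, h) (0, a) (rect_shape b a).
Proof.
  intros Hb Ha x.
  set (u1 := fst x / b); set (u2 := (snd x - u1 * h) / a).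
  exists (lattice_point b h a u1 u2); split.
  - split; [exists u1, u2; reflexivity|].
    apply rect_translate_iff; auto.
  - intros l' Hl' Hx. apply in_lattice_rows in Hl' as [w1 [w2 ->]].
    apply rect_translate_iff in Hx as [-> ->]; auto.
Qed.

Definition rect_row (b a h : Z) (k : nat) : pt :=
  (Z.of_nat k mod b, (- (Z.of_nat k / b) * h) mod a).

(* With q = k / b and q' = (k+1) / b, the step subtracts the lattice point
   with coordinates (q' - q, ((-q' h) / a) - ((-q h) / a)). *)
Lemma rect_row_is_folded_row (b a h : Z) : 0 < b -> 0 < a ->
  is_folded_row (b, h) (0, a) (rect_shape b a) (1, 0) (rect_row b a h).
Proof.
  intros Hb Ha; split; [reflexivity|]; intros k.
  unfold rect_row; rewrite Nat2Z.inj_succ; unfold Z.succ.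
  set (K := Z.of_nat k); set (q := K / b); set (q' := (K + 1) / b).
  pose proof (Z.div_mod K b ltac:(lia)); pose proof (Z.mod_pos_bound K b Hb).
  pose proof (Z.div_mod (K + 1) b ltac:(lia)); pose proof (Z.mod_pos_bound (K + 1) b Hb).
  pose proof (Z.div_mod (- q * h) a ltac:(lia)); pose proof (Z.mod_pos_bound (- q * h) a Ha).
  pose proof (Z.div_mod (- q' * h) a ltac:(lia)); pose proof (Z.mod_pos_bound (- q' * h) a Ha).
  split.
  - exists (q' - q), ((- q' * h) / a - (- q * h) / a).
    unfold padd, psub; simpl; f_equal; lia.
  - unfold in_translate, rect_shape, padd, psub; simpl; lia.
Qed.

(* When h is invertible modulo a, the row visits every cell of the rectangle:
   the cell (i, j) is reached in column block q = (-j u) mod a. *)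
Lemma rect_row_covers (b a h u v : Z) : 0 < b -> 0 < a -> u * h + v * a = 1 ->
  forall s : pt, rect_shape b a s -> exists k : nat, rect_row b a h k = s.
Proof.
  intros Hb Ha Huv [i j] [Hi Hj]; simpl in Hi, Hj.
  set (q := (- (j * u)) mod a).
  pose proof (Z.div_mod (- (j * u)) a ltac:(lia)) as Eq.
  pose proof (Z.mod_pos_bound (- (j * u)) a Ha) as Bq.
  fold q in Eq, Bq.
  exists (Z.to_nat (q * b + i)); unfold rect_row.
  rewrite Z2Nat.id by nia.
  assert (Hdiv : (q * b + i) / b = q) by (symmetry; apply Z.div_unique_pos with i; lia).
  assert (Hmod : (q * b + i) mod b = i) by (symmetry; apply Z.mod_unique_pos with q; lia).
  rewrite Hdiv, Hmod; f_equal.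
  (* -q h ≡ j u h = j - j v a ≡ j  (mod a) *)
  assert (Hj' : j = j * u * h + j * v * a).
  { transitivity (j * (u * h + v * a)); [rewrite Huv|]; ring. }
  symmetry; apply Z.mod_unique_pos with ((- (j * u)) / a * h - j * v); [lia|].
  nia.
Qed.

Lemma theta_0_mod_4 (n : Z) : theta (4 * n) = 1.
Proof. unfold theta; rewrite Z.mul_comm, Z.mod_mul by lia; reflexivity. Qed.

Lemma theta_2_mod_4 (n : Z) : theta (4 * n + 2) = 2.
Proof.
  unfold theta; replace (4 * n + 2) with (2 + n * 4) by ring.
  rewrite Z_mod_plus_full; reflexivity.
Qed.

Lemma theta_shift_bezout (alpha : Z) : Z.Even alpha ->
  exists u v, u * (alpha / 2 + theta alpha) + v * alpha = 1.
Proof.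
  intros [m ->].
  destruct (Z.Even_or_Odd m) as [[n ->] | [n ->]].
  - (* α = 4n, h = 2n + 1 *)
    replace (2 * (2 * n)) with (4 * n) by ring.
    rewrite theta_0_mod_4, <- (Z.div_unique_pos (4 * n) 2 (2 * n) 0) by lia.
    exists (1 - 2 * n), n; ring.
  - (* α = 4n + 2, h = 2n + 3 *)
    replace (2 * (2 * n + 1)) with (4 * n + 2) by ring.
    rewrite theta_2_mod_4, <- (Z.div_unique_pos (4 * n + 2) 2 (2 * n + 1) 0) by lia.
    destruct (Z.Even_or_Odd n) as [[t ->] | [t ->]].
    + exists (2 * t + 1), (- (t + 1)); ring.
    + exists (6 * t + 5), (- (3 * t + 4)); ring.
Qed.

Theorem mainTheorem10 (alpha beta : Z) :
  2 <= alpha -> Z.Even alpha -> 1 <= beta ->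
  let v1 := (beta, alpha / 2 + theta alpha) in
  let v2 := (0, alpha) in
  lattice_tiling v1 v2 (rect_shape beta alpha) /\
  defines_folding v1 v2 (rect_shape beta alpha) (1, 0).
Proof.
  intros Halpha Heven Hbeta v1 v2; subst v1 v2.
  set (h := alpha / 2 + theta alpha).
  destruct (theta_shift_bezout alpha Heven) as [u [v Huv]].
  assert (Htiling := rect_lattice_tiling beta alpha h ltac:(lia) ltac:(lia)).
  split; [exact Htiling|].
  split; [exact Htiling|].
  exists (rect_row beta alpha h); split.
  - apply rect_row_is_folded_row; lia.
  - apply rect_row_covers with u v; lia.
Qed.
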